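(* Let $ABC$ be a non-equilateral triangle with semiperimeter $s$, circumradius $R$, inradius $r$, circumcenter $O$, centroid $G$ and incenter $I$. Then $$\cos\widehat{GOI}=\frac{6R^2-s^2-r^2+2Rr}{2\sqrt{9R^2-2s^2+2r^2+8Rr}\cdot\sqrt{R^2-2Rr}}.$$
   Context: The centroid $G$ has barycentric coordinates $1:1:1$ and the incenter $I$ has barycentric coordinates $a:b:c$, where $a=BC$, $b=CA$, $c=AB$. *)

From Stdlib Require Import Reals Lra.
Open Scope R_scope.

Definition point := (R * R)%type.

Definition padd (P Q : point) : point := (fst P + fst Q, snd P + snd Q).
Definition psub (P Q : point) : point := (fst P - fst Q, snd P - snd Q).
Definition pscale (k : R) (P : point) : point := (k * fst P, k * snd P).
Definition dot (u v : point) : R := fst u * fst v + snd u * snd v.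
Definition cross (u v : point) : R := fst u * snd v - snd u * fst v.
Definition norm (u : point) : R := sqrt (dot u u).
Definition pdist (P Q : point) : R := norm (psub P Q).

Definition nondegenerate (A B C : point) : Prop := cross (psub B A) (psub C A) <> 0.

Definition angle (P O Q : point) : R :=
  acos (dot (psub P O) (psub Q O) / (norm (psub P O) * norm (psub Q O))).

Definition side_a (A B C : point) : R := pdist B C.
Definition side_b (A B C : point) : R := pdist C A.
Definition side_c (A B C : point) : R := pdist A B.
Definition semiperimeter (A B C : point) : R :=
  (side_a A B C + side_b A B C + side_c A B C) / 2.

Definition centroid (A B C : point) : point :=
  pscale (/3) (padd A (padd B C)).

(* incenter: barycentric a:b:c *)
Definition incenter (A B C : point) : point :=
  let a := side_a A B C in let b := side_b A B C in let c := side_c A B C in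
  pscale (/ (a + b + c)) (padd (pscale a A) (padd (pscale b B) (pscale c C))).

Definition inradius (A B C : point) : R :=
  Rabs (cross (psub C B) (psub (incenter A B C) B)) / pdist B C.

Definition is_circumcenter (A B C O : point) : Prop :=
  pdist O A = pdist O B /\ pdist O B = pdist O C.

Definition equilateral (A B C : point) : Prop :=
  side_a A B C = side_b A B C /\ side_b A B C = side_c A B C.

From Stdlib Require Import Reals Lra Psatz.
Open Scope R_scope.

(* Put u = A - O, v = B - O, w = C - O.  Since O is the
   circumcenter, |u| = |v| = |w| = R and polarization gives u.v = R^2 - c^2/2
   (cyclically).  The vectors O->G and O->I are the combinations
   (u + v + w)/3 and (a u + b v + c w)/(a + b + c), so expanding the Gram
   matrix yields, with S = a + b + c,
     9 |OG|^2 = 9R^2 - (a^2 + b^2 + c^2),   |OI|^2 = R^2 - abc/S,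
     6 OG.OI = 6R^2 - (a(b^2+c^2) + b(c^2+a^2) + c(a^2+b^2))/S.
   On the other hand Heron's formula (r^2 s = (s-a)(s-b)(s-c)) and the
   circumradius relation abc = 4Rrs express the symmetric functions of the
   sides through s, r, R.  Substituting gives the three quantities in the
   formula, and cos(GOI) = OG.OI/(|OG||OI|) (valid also when G or I equals O,
   both sides then being 0) finishes the proof. *)

Lemma dot_self_nonneg (u : point) : 0 <= dot u u.
Proof. unfold dot; nra. Qed.

Lemma norm_sq (u : point) : norm u * norm u = dot u u.
Proof. apply sqrt_sqrt, dot_self_nonneg. Qed.

Lemma lagrange_identity (u v : point) : dot u u * dot v v = dot u v ^ 2 + cross u v ^ 2.
Proof. unfold dot, cross; ring. Qed.

(* Cauchy-Schwarz: it keeps the cosine ratio inside the domain of acos. *)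
Lemma cauchy_schwarz (u v : point) : dot u v ^ 2 <= dot u u * dot v v.
Proof. rewrite lagrange_identity; nra. Qed.

(* The cosine of an angle is the normalized dot product; when a side is
   degenerate both sides are 0, because acos 0 = PI/2 and x / 0 = 0. *)
Lemma cos_angle (P O Q : point) :
  cos (angle P O Q) = dot (psub P O) (psub Q O) / (norm (psub P O) * norm (psub Q O)).
Proof.
  unfold angle; set (u := psub P O); set (v := psub Q O).
  set (p := norm u * norm v).
  assert (Hp0 : 0 <= p) by (apply Rmult_le_pos; apply sqrt_pos).
  destruct (Req_dec p 0) as [Hp | Hp].
  - rewrite Hp, Rdiv_0_r, acos_0; apply cos_PI2.
  - assert (Hpp : p * p = dot u u * dot v v)
      by (unfold p; rewrite <- norm_sq, <- (norm_sq v); ring).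
    assert (Hcs := cauchy_schwarz u v).
    assert (Hquot : dot u v / p * p = dot u v) by (field; exact Hp).
    assert (Hpos : 0 < p) by lra.
    set (x := dot u v / p) in *; set (d := dot u v) in *.
    assert (Hd : - p <= d <= p) by (split; nra).
    apply cos_acos; split; nra.
Qed.

Lemma sqrt_9_mult (x : R) : 0 <= x -> sqrt (9 * x) = 3 * sqrt x.
Proof.
  intro Hx. rewrite sqrt_mult by lra.
  replace 9 with (3 * 3) by ring. rewrite sqrt_square by lra. reflexivity.
Qed.

(* The cosine ratio in the shape of the theorem: numerator 6 g.i over
   2 sqrt(9 |g|^2) sqrt(|i|^2). *)
Lemma cos_ratio_rescaled (g i : point) :
  dot g i / (norm g * norm i) = 6 * dot g i / (2 * sqrt (9 * dot g g) * sqrt (dot i i)).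
Proof.
  rewrite sqrt_9_mult by apply dot_self_nonneg.
  fold (norm g) (norm i).
  replace (2 * (3 * norm g) * norm i) with (6 * (norm g * norm i)) by ring.
  rewrite Rdiv_mult_l_l by lra; reflexivity.
Qed.

Lemma pdist_sq (P Q : point) : pdist P Q ^ 2 = dot (psub P Q) (psub P Q).
Proof. unfold pdist; rewrite <- norm_sq; ring. Qed.

Lemma pdist_nonneg (P Q : point) : 0 <= pdist P Q.
Proof. apply sqrt_pos. Qed.

Lemma pdist_refl (P : point) : pdist P P = 0.
Proof.
  unfold pdist, norm, dot, psub; simpl.
  transitivity (sqrt 0); [f_equal; ring | apply sqrt_0].
Qed.

Lemma dot_at_vertex (P O Q : point) :
  dot (psub P O) (psub Q O) = (pdist O P ^ 2 + pdist O Q ^ 2 - pdist P Q ^ 2) / 2.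
Proof.
  rewrite !pdist_sq; destruct P, O, Q; unfold dot, psub; simpl; field.
Qed.

Lemma heron_vector (p q : point) :
  4 * cross p q ^ 2 =
    2 * dot (psub p q) (psub p q) * dot q q + 2 * dot q q * dot p p
    + 2 * dot p p * dot (psub p q) (psub p q)
    - dot (psub p q) (psub p q) ^ 2 - dot q q ^ 2 - dot p p ^ 2.
Proof. destruct p, q; unfold dot, cross, psub; simpl; ring. Qed.

(* If o (seen from vertex 0) is equidistant from 0, p and q, then
   (2 area)^2 |o|^2 = |p|^2 |q|^2 |p - q|^2, i.e. abc = 4 R area. *)
Lemma circumradius_vector (o p q : point) :
  2 * dot o p = dot p p -> 2 * dot o q = dot q q ->
  4 * cross p q ^ 2 * dot o o = dot p p * dot q q * dot (psub p q) (psub p q).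
Proof.
  destruct o as [o1 o2], p as [p1 p2], q as [q1 q2]; unfold dot, cross, psub; simpl.
  intros Hp Hq.
  set (K := p1 * q2 - p2 * q1).
  assert (Ho1 : 2 * K * o1 = (p1 * p1 + p2 * p2) * q2 - (q1 * q1 + q2 * q2) * p2)
    by (rewrite <- Hp, <- Hq; unfold K; ring).
  assert (Ho2 : 2 * K * o2 = (q1 * q1 + q2 * q2) * p1 - (p1 * p1 + p2 * p2) * q1)
    by (rewrite <- Hp, <- Hq; unfold K; ring).
  transitivity ((2 * K * o1) ^ 2 + (2 * K * o2) ^ 2); [ring |].
  rewrite Ho1, Ho2; ring.
Qed.

Lemma pdist_sym (P Q : point) : pdist P Q = pdist Q P.
Proof. unfold pdist, norm, dot, psub; simpl; f_equal; ring. Qed.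

Lemma psub_psub (A B C : point) : psub (psub B A) (psub C A) = psub B C.
Proof. destruct A, B, C; unfold psub; simpl; f_equal; ring. Qed.

Definition twice_area (A B C : point) : R := Rabs (cross (psub B A) (psub C A)).

Lemma heron_sides (A B C : point) :
  let a := side_a A B C in let b := side_b A B C in let c := side_c A B C in
  4 * twice_area A B C ^ 2 =
    2 * a^2 * b^2 + 2 * b^2 * c^2 + 2 * c^2 * a^2 - a^4 - b^4 - c^4.
Proof.
  unfold twice_area, side_a, side_b, side_c.
  rewrite pow2_abs, heron_vector, psub_psub, (pdist_sym A B), <- !pdist_sq; ring.
Qed.

Lemma twice_area_pos (A B C : point) : nondegenerate A B C -> 0 < twice_area A B C.
Proof. intro Hnd; apply Rabs_pos_lt, Hnd. Qed.

(* In a nondegenerate triangle the side BC is not zero: otherwise Heron's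
   formula would give 4 area^2 = -(b^2 - c^2)^2 <= 0. *)
Lemma side_a_pos (A B C : point) : nondegenerate A B C -> 0 < side_a A B C.
Proof.
  intro Hnd.
  assert (HT := twice_area_pos A B C Hnd).
  assert (Hh := heron_sides A B C); cbv zeta in Hh.
  assert (Ha := pdist_nonneg B C); unfold side_a, side_b, side_c in *.
  destruct (Req_dec (pdist B C) 0) as [H0 | H0]; [| lra].
  rewrite H0 in Hh.
  assert (Hneg : 4 * twice_area A B C ^ 2 = - (pdist C A ^ 2 - pdist A B ^ 2) ^ 2)
    by (rewrite Hh; ring).
  assert (Hsq := pow2_ge_0 (pdist C A ^ 2 - pdist A B ^ 2)).
  nra.
Qed.

Lemma perimeter_pos (A B C : point) :
  nondegenerate A B C -> 0 < side_a A B C + side_b A B C + side_c A B C.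
Proof.
  intro Hnd. assert (Ha := side_a_pos A B C Hnd).
  assert (Hb := pdist_nonneg C A); assert (Hc := pdist_nonneg A B).
  unfold side_b, side_c; lra.
Qed.

(* r = 2 area / (a + b + c): the distance from I to BC is a/(a+b+c) times
   the height from A. *)
Lemma inradius_twice_area (A B C : point) : nondegenerate A B C ->
  inradius A B C = twice_area A B C / (side_a A B C + side_b A B C + side_c A B C).
Proof.
  intro Hnd.
  assert (Ha := side_a_pos A B C Hnd); assert (HS := perimeter_pos A B C Hnd).
  unfold inradius, incenter, twice_area; cbv zeta.
  change (pdist B C) with (side_a A B C).
  set (a := side_a A B C) in *; set (b := side_b A B C) in *; set (c := side_c A B C) in *.
  clearbody a b c.
  replace (cross (psub C B) (psub _ B)) with (a / (a + b + c) * cross (psub B A) (psub C A))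
    by (destruct A, B, C; unfold cross, psub, pscale, padd; simpl; field; lra).
  rewrite Rabs_mult, (Rabs_pos_eq (a / (a + b + c))) by (apply Rlt_le, Rdiv_lt_0_compat; lra).
  field; lra.
Qed.

Lemma circumradius_twice_area (A B C O : point) : is_circumcenter A B C O ->
  side_a A B C * side_b A B C * side_c A B C = 2 * pdist O A * twice_area A B C.
Proof.
  intros [HAB HBC].
  assert (Hp : 2 * dot (psub O A) (psub B A) = dot (psub B A) (psub B A)).
  { assert (E := f_equal (fun x => x ^ 2) HAB); cbv beta in E; rewrite !pdist_sq in E.
    destruct A, B, O; unfold dot, psub in *; simpl in *; lra. }
  assert (Hq : 2 * dot (psub O A) (psub C A) = dot (psub C A) (psub C A)).
  { assert (E := f_equal (fun x => x ^ 2) (eq_trans HAB HBC)); cbv beta in E; rewrite !pdist_sq in E.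
    destruct A, C, O; unfold dot, psub in *; simpl in *; lra. }
  assert (Hsq := circumradius_vector _ _ _ Hp Hq).
  rewrite psub_psub, <- !pdist_sq, (pdist_sym B A) in Hsq.
  unfold side_a, side_b, side_c, twice_area.
  apply Rsqr_inj; unfold Rsqr.
  - repeat apply Rmult_le_pos; apply pdist_nonneg.
  - repeat apply Rmult_le_pos; [lra | apply pdist_nonneg | apply Rabs_pos].
  - transitivity (pdist A B ^ 2 * pdist C A ^ 2 * pdist B C ^ 2); [ring |].
    rewrite <- Hsq, <- (pow2_abs (cross _ _)). ring.
Qed.

(* Heron's formula with area = r s:  r^2 s = (s-a)(s-b)(s-c). *)
Lemma heron_inradius (A B C : point) : nondegenerate A B C ->
  let a := side_a A B C in let b := side_b A B C in let c := side_c A B C in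
  let s := semiperimeter A B C in
  inradius A B C ^ 2 * s = (s - a) * (s - b) * (s - c).
Proof.
  intros Hnd a b c s.
  assert (HS := perimeter_pos A B C Hnd).
  assert (Hh := heron_sides A B C).
  rewrite (inradius_twice_area A B C Hnd).
  unfold s, semiperimeter; fold a b c in HS, Hh |- *.
  replace ((twice_area A B C / (a + b + c)) ^ 2 * ((a + b + c) / 2))
    with (4 * twice_area A B C ^ 2 / (8 * (a + b + c))) by (field; lra).
  rewrite Hh; field; lra.
Qed.

Lemma circumradius_inradius (A B C O : point) :
  nondegenerate A B C -> is_circumcenter A B C O ->
  side_a A B C * side_b A B C * side_c A B C =
    4 * pdist O A * inradius A B C * semiperimeter A B C.
Proof.
  intros Hnd Hcirc.
  assert (HS := perimeter_pos A B C Hnd).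
  rewrite (circumradius_twice_area A B C O Hcirc), (inradius_twice_area A B C Hnd).
  unfold semiperimeter; field; lra.
Qed.

Section SymmetricFunctionsOfSides.

Variables a b c s R r : R.
Hypothesis perimeter : a + b + c = 2 * s.
Hypothesis s_pos : 0 < s.
Hypothesis heron : r ^ 2 * s = (s - a) * (s - b) * (s - c).
Hypothesis circumradius : a * b * c = 4 * R * r * s.

(* Expanding (s-a)(s-b)(s-c) = -s^3 + s(ab+bc+ca) - abc. *)
Lemma sum_pair_products : a * b + b * c + c * a = s ^ 2 + r ^ 2 + 4 * R * r.
Proof.
  apply (Rmult_eq_reg_l s); [| lra].
  assert (Hc : c = 2 * s - a - b) by lra; subst c.
  lra.
Qed.

Lemma sum_squares : a ^ 2 + b ^ 2 + c ^ 2 = 2 * s ^ 2 - 2 * r ^ 2 - 8 * R * r.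
Proof.
  transitivity ((a + b + c) ^ 2 - 2 * (a * b + b * c + c * a)); [ring |].
  rewrite perimeter, sum_pair_products; ring.
Qed.

(* The numerator of OG.OI:  sum a(b^2+c^2) = (a+b+c)(ab+bc+ca) - 3abc. *)
Lemma sum_mixed_cubes :
  a * (b ^ 2 + c ^ 2) + b * (c ^ 2 + a ^ 2) + c * (a ^ 2 + b ^ 2) =
    2 * s * (s ^ 2 + r ^ 2 - 2 * R * r).
Proof.
  transitivity ((a + b + c) * (a * b + b * c + c * a) - 3 * (a * b * c)); [ring |].
  rewrite perimeter, sum_pair_products, circumradius; ring.
Qed.

End SymmetricFunctionsOfSides.

Definition comb (x y z : R) (u v w : point) : point :=
  padd (pscale x u) (padd (pscale y v) (pscale z w)).

Lemma dot_comb (x y z x' y' z' : R) (u v w : point) :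
  dot (comb x y z u v w) (comb x' y' z' u v w) =
    x * x' * dot u u + y * y' * dot v v + z * z' * dot w w
    + (x * y' + y * x') * dot u v + (y * z' + z * y') * dot v w
    + (z * x' + x * z') * dot w u.
Proof. destruct u, v, w; unfold dot, comb, padd, pscale; simpl; ring. Qed.

Lemma centroid_from (A B C O : point) :
  psub (centroid A B C) O = comb (/3) (/3) (/3) (psub A O) (psub B O) (psub C O).
Proof.
  destruct A, B, C, O; unfold centroid, comb, psub, padd, pscale; simpl; f_equal; field.
Qed.

Lemma incenter_from (A B C O : point) :
  let a := side_a A B C in let b := side_b A B C in let c := side_c A B C in
  0 < a + b + c ->
  psub (incenter A B C) O =
    comb (a / (a + b + c)) (b / (a + b + c)) (c / (a + b + c)) (psub A O) (psub B O) (psub C O).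
Proof.
  intros a b c HS. unfold incenter; fold a b c; clearbody a b c.
  destruct A, B, C, O; unfold comb, psub, padd, pscale; simpl; f_equal; field; lra.
Qed.

Lemma dot_at_circumcenter (P Q O : point) (R : R) :
  pdist O P = R -> pdist O Q = R -> dot (psub P O) (psub Q O) = R ^ 2 - pdist P Q ^ 2 / 2.
Proof. intros HP HQ; rewrite dot_at_vertex, HP, HQ; field. Qed.

Section CircumcenterDistances.

Variables A B C O : point.
Hypothesis circumcenter : is_circumcenter A B C O.

Let R := pdist O A.
Let a := side_a A B C.
Let b := side_b A B C.
Let c := side_c A B C.

Lemma circumcenter_gram :
  dot (psub A O) (psub A O) = R ^ 2 /\ dot (psub B O) (psub B O) = R ^ 2 /\
  dot (psub C O) (psub C O) = R ^ 2 /\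
  dot (psub A O) (psub B O) = R ^ 2 - c ^ 2 / 2 /\
  dot (psub B O) (psub C O) = R ^ 2 - a ^ 2 / 2 /\
  dot (psub C O) (psub A O) = R ^ 2 - b ^ 2 / 2.
Proof.
  destruct circumcenter as [HAB HBC].
  assert (HA : pdist O A = R) by reflexivity.
  assert (HB : pdist O B = R) by (rewrite <- HAB; reflexivity).
  assert (HC : pdist O C = R) by (rewrite <- HBC; exact HB).
  rewrite !(dot_at_circumcenter _ _ O R) by assumption.
  rewrite !pdist_refl; unfold a, b, c, side_a, side_b, side_c.
  repeat split; field.
Qed.

Lemma centroid_dist_sq :
  9 * dot (psub (centroid A B C) O) (psub (centroid A B C) O) = 9 * R ^ 2 - (a ^ 2 + b ^ 2 + c ^ 2).
Proof.
  destruct circumcenter_gram as (HAA & HBB & HCC & HAB & HBC & HCA).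
  rewrite centroid_from, dot_comb, HAA, HBB, HCC, HAB, HBC, HCA; field.
Qed.

(* OI^2 = R^2 - abc/(a+b+c)  (Euler's formula before using abc = 4Rrs). *)
Lemma incenter_dist_sq : 0 < a + b + c ->
  dot (psub (incenter A B C) O) (psub (incenter A B C) O) = R ^ 2 - a * b * c / (a + b + c).
Proof.
  intro HS.
  destruct circumcenter_gram as (HAA & HBB & HCC & HAB & HBC & HCA).
  rewrite incenter_from, dot_comb, HAA, HBB, HCC, HAB, HBC, HCA by exact HS.
  fold a b c; field; lra.
Qed.

Lemma centroid_incenter_dot : 0 < a + b + c ->
  6 * dot (psub (centroid A B C) O) (psub (incenter A B C) O) =
    6 * R ^ 2 - (a * (b ^ 2 + c ^ 2) + b * (c ^ 2 + a ^ 2) + c * (a ^ 2 + b ^ 2)) / (a + b + c).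
Proof.
  intro HS.
  destruct circumcenter_gram as (HAA & HBB & HCC & HAB & HBC & HCA).
  rewrite centroid_from, incenter_from, dot_comb, HAA, HBB, HCC, HAB, HBC, HCA by exact HS.
  fold a b c; field; lra.
Qed.

End CircumcenterDistances.

(* The angle GOI: the three quantities entering its cosine are expressed
   through R, r, s. *)
Theorem mainTheorem6 (A B C O : point) :
  nondegenerate A B C ->
  ~ equilateral A B C ->
  is_circumcenter A B C O ->
  let s := semiperimeter A B C in
  let R := pdist O A in
  let r := inradius A B C in
  let G := centroid A B C in
  let I := incenter A B C in
  cos (angle G O I) =
    (6 * R ^ 2 - s ^ 2 - r ^ 2 + 2 * R * r) /
    (2 * sqrt (9 * R ^ 2 - 2 * s ^ 2 + 2 * r ^ 2 + 8 * R * r) * sqrt (R ^ 2 - 2 * R * r)).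
Proof.
  intros Hnd _ Hcirc s R r G I.
  assert (HS := perimeter_pos A B C Hnd).
  assert (Hperim : side_a A B C + side_b A B C + side_c A B C = 2 * s)
    by (unfold s, semiperimeter; field).
  assert (Hs : 0 < s) by lra.
  assert (Hheron := heron_inradius A B C Hnd); cbv zeta in Hheron; fold s r in Hheron.
  assert (Habc := circumradius_inradius A B C O Hnd Hcirc); fold s R r in Habc.
  assert (HOG : 9 * dot (psub G O) (psub G O) = 9 * R ^ 2 - 2 * s ^ 2 + 2 * r ^ 2 + 8 * R * r).
  { unfold G; rewrite (centroid_dist_sq A B C O Hcirc), (sum_squares _ _ _ s R r Hperim Hs Hheron Habc); fold R; ring. }
  assert (HOI : dot (psub I O) (psub I O) = R ^ 2 - 2 * R * r).
  { unfold I; rewrite (incenter_dist_sq A B C O Hcirc HS), Habc, Hperim; fold R; field; lra. }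
  assert (HGI : 6 * dot (psub G O) (psub I O) = 6 * R ^ 2 - s ^ 2 - r ^ 2 + 2 * R * r).
  { unfold G, I; rewrite (centroid_incenter_dot A B C O Hcirc HS).
    rewrite (sum_mixed_cubes _ _ _ s R r Hperim Hs Hheron Habc), Hperim; fold R; field; lra. }
  rewrite cos_angle, cos_ratio_rescaled, HOG, HOI, HGI; reflexivity.
Qed.
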